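(* Let $\omega\ge 2$ and let $\Gamma$ be a finite simple graph that is $\omega$-clique regular and is a non-boring $\mathrm{srg}(n,k,\lambda,\mu)$ with spectrum $k^1, r^f, s^g$ where $r>s$. Then $C_\omega(\Gamma)$ is strongly regular if and only if $s=\frac{-k}{\omega-1}$ or $k=\omega(\omega-1)$. In that case $C_\omega(\Gamma)$ is an \[\mathrm{srg}\left(\frac{nk}{\omega(\omega-1)},\ \omega\left(\frac{k}{\omega-1}-1\right),\ \lambda^*,\ \mu^*\right)\] for some $\lambda^*,\mu^*$, and if moreover $\lambda=\omega-2$, then $\lambda^*=\frac{k}{\omega-1}-2$ and $\mu^*=\mu+\omega-\frac{k}{\omega-1}$.
   Context: A graph is $\omega$-clique regular if it has a nonempty edge set and every edge lies in exactly one clique of order $\omega$. The $\omega$-clique graph $C_\omega(\Gamma)$ has as vertices the cliques of order $\omega$ in $\Gamma$, two distinct ones adjacent iff they have nonempty intersection. A graph is strongly regular with parameters $(n,k,\lambda,\mu)$, $\mathrm{srg}(n,k,\lambda,\mu)$, if it has $n$ vertices, is $k$-regular, adjacent vertices have exactly $\lambda$ common neighbours and distinct non-adjacent vertices have exactly $\mu$ common neighbours. A strongly regular graph is called boring if it has at most two distinct adjacency eigenvalues (disjoint unions of complete graphs of equal size and their complements), and non-boring otherwise; a non-boring srg has exactly three eigenvalues $k>r>s$ with multiplicities $1,f,g$. Spectrum exponents denote multiplicities. *)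

From HB Require Import structures.
From mathcomp Require Import all_boot all_order all_algebra all_field.
Set Implicit Arguments. Unset Strict Implicit. Unset Printing Implicit Defensive.
Import Order.TTheory GRing.Theory Num.Theory.
Local Open Scope ring_scope.

Section Graphs.
Variable U : finType.

Definition srg_on (V : {set U}) (e : rel U) (n k lam mu : nat) : Prop :=
  [/\ #|V| = n,
      (forall x, x \in V -> #|[set y in V | e x y]| = k),
      (forall x y, x \in V -> y \in V -> x != y -> e x y ->
         #|[set z in V | e x z && e y z]| = lam) &
      (forall x y, x \in V -> y \in V -> x != y -> ~~ e x y ->
         #|[set z in V | e x z && e y z]| = mu)].

Definition is_clique (e : rel U) (A : {set U}) : bool :=
  [forall x in A, forall y in A, (x != y) ==> e x y].

Definition wcliques (e : rel U) (w : nat) : {set {set U}} :=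
  [set A : {set U} | is_clique e A && (#|A| == w)].

Definition clique_regular (e : rel U) (w : nat) : Prop :=
  (exists x y, e x y) /\
  (forall x y, e x y ->
     #|[set A in wcliques e w | (x \in A) && (y \in A)]| = 1%N).

(* adjacency relation of the w-clique graph (on {set U}; its vertex set is wcliques e w) *)
Definition cgraph_rel : rel {set U} :=
  fun A B => (A != B) && (A :&: B != set0).

Definition adjmx (e : rel U) : 'M[algC]_#|U| :=
  \matrix_(i, j) (e (enum_val i) (enum_val j))%:R.

Definition adj_eigenvalue (e : rel U) (a : algC) : Prop := eigenvalue (adjmx e) a.

Definition nonboring (e : rel U) : Prop :=
  exists a b c : algC, adj_eigenvalue e a /\ adj_eigenvalue e b /\ adj_eigenvalue e c /\
                          a != b /\ b != c /\ a != c.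
End Graphs.

From HB Require Import structures.
From mathcomp Require Import all_boot all_order all_algebra all_field.
From mathcomp Require Import ring zify.
Import Order.TTheory GRing.Theory Num.Theory.
Local Open Scope ring_scope.
Set Implicit Arguments. Unset Strict Implicit. Unset Printing Implicit Defensive.

(* Let N be the vertex-clique incidence matrix of Γ, B the adjacency matrix of
   C_ω(Γ) and c = k/(ω-1) the number of ω-cliques on a vertex, so that
   N Nᵀ = A + cI and Nᵀ N = B + ωI. Multiplying the identity
   (A - rI)(A - sI) = μJ by Nᵀ on the left and N on the right gives
   (P - (r+c)I)(P - (s+c)I)P = μω²J for P = Nᵀ N. If c = ω and s ≠ -c, then N
   is square and invertible and P can be cancelled; if s = -c, then
   Nᵀ((A - rI)N - (μ/c)J) is a real symmetric matrix with zero square, hence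
   zero. Either way (B + (ω-r-c)I)(B + (ω-s-c)I) = (μω/c)J, so C_ω(Γ) is
   strongly regular. Conversely, if s ≠ -c and c ≠ ω, then A + cI is
   invertible, N has more columns than rows, and B has the three eigenvalues
   r + c - ω, s + c - ω and -ω besides its valency; but the other eigenvalues
   of a strongly regular graph are roots of a single quadratic. *)

Local Notation J := (const_mx 1).

Section QuadraticRoots.
Variable R : idomainType.

Lemma quadratic_roots_sum (p q x y : R) :
  x ^+ 2 = p * x + q -> y ^+ 2 = p * y + q -> x != y -> x + y = p.
Proof.
move=> Hx Hy xy; have : (x - y) * (x + y - p) = 0.
  by transitivity (x ^+ 2 - y ^+ 2 - p * x + p * y); [ring | rewrite Hx Hy; ring].
by move/eqP; rewrite mulf_eq0 subr_eq0 (negbTE xy) subr_eq0 => /eqP.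
Qed.

Lemma quadratic_third_root (p q a b d : R) :
  a ^+ 2 = p * a + q -> b ^+ 2 = p * b + q -> d ^+ 2 = p * d + q ->
  a != b -> a != d -> b = d.
Proof.
move=> Ha Hb Hd ab ad; apply: (addrI a).
by rewrite (quadratic_roots_sum Ha Hb ab) (quadratic_roots_sum Ha Hd ad).
Qed.

End QuadraticRoots.

Section RealSymmetric.
Variable R : numDomainType.

Lemma realmx_sym_sqr_eq0 p (D : 'M[R]_p) :
  D \is a mxOver Num.real -> D^T = D -> D *m D = 0 -> D = 0.
Proof.
move=> /mxOverP Dreal DT DD; apply/matrixP => i j; rewrite mxE.
have : \sum_l `|D i l| ^+ 2 = 0.
  transitivity ((D *m D) i i); last by rewrite DD mxE.
  rewrite mxE; apply: eq_bigr => l _.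
  by rewrite -[in D l i]DT mxE real_normK ?Dreal // expr2.
move/eqP; rewrite psumr_eq0 => [/allP/(_ j (mem_index_enum _))|l _]; last first.
  exact: exprn_ge0.
by rewrite implyTb sqrf_eq0 normr_eq0 => /eqP.
Qed.

Lemma realmxB m p (X Y : 'M[R]_(m, p)) :
  X \is a mxOver Num.real -> Y \is a mxOver Num.real -> X - Y \is a mxOver Num.real.
Proof. by move=> /mxOverP Xr /mxOverP Yr; apply/mxOverP => i j; rewrite !mxE rpredB. Qed.

End RealSymmetric.

Section EigenvectorsAndJ.
Variable F : fieldType.

Lemma mulJJ a b d : (J : 'M[F]_(a, b)) *m (J : 'M_(b, d)) = b%:R *: J.
Proof.
apply/matrixP => i j; rewrite !mxE (eq_bigr (fun=> 1)) => [|l _]; last by rewrite !mxE mulr1.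
by rewrite sumr_const card_ord mulr1.
Qed.

Lemma trmx_mul_shift m p (M : 'M[F]_(m, p)) a :
  (M^T *m M - a%:M) *m M^T = M^T *m (M *m M^T - a%:M).
Proof. by rewrite mulmxBl mulmxBr -mulmxA mul_scalar_mx mul_mx_scalar. Qed.

Lemma mulmx_shift p (M : 'M[F]_p) a b :
  (M + a%:M) *m (M + b%:M) = M *m M + (a + b) *: M + (a * b)%:M.
Proof.
rewrite mulmxDl !mulmxDr mul_mx_scalar mul_scalar_mx -scalar_mxM scalerDl.
by rewrite addrA -(addrA (M *m M)) (addrC (b *: M)).
Qed.

Lemma scaleIv p (v : 'rV[F]_p) : v != 0 -> injective (fun a : F => a *: v).
Proof.
move=> v0 a b /eqP; rewrite -subr_eq0 -scalerBl scaler_eq0 (negbTE v0) orbF subr_eq0.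
by move/eqP.
Qed.

Lemma eigenvector_mulJ p (M : 'M[F]_p) (v : 'rV_p) a d :
  v *m M = a *: v -> M *m (J : 'M_p) = d *: J -> a != d -> v *m (J : 'M_p) = 0.
Proof.
move=> vM MJ ad; have : (a - d) *: (v *m (J : 'M_p)) = 0.
  by rewrite scalerBl scalemxAl -vM -mulmxA MJ -scalemxAr subrr.
by move/eqP; rewrite scaler_eq0 subr_eq0 (negbTE ad) => /eqP.
Qed.

Lemma eigenvector_sqr_root p (M E : 'M[F]_p) (v : 'rV_p) a x y :
  v != 0 -> v *m M = a *: v -> M *m M = x%:M + y *: M + E -> v *m E = 0 ->
  a ^+ 2 = y * a + x.
Proof.
move=> v0 vM MM vE; apply: (scaleIv v0) => /=.
rewrite expr2 -scalerA -vM scalemxAl -vM -mulmxA MM !mulmxDr vE addr0.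
by rewrite mul_mx_scalar -scalemxAr vM scalerA scalerDl addrC.
Qed.

End EigenvectorsAndJ.

Section AdjacencyMatrix.
Variables (U : finType) (V : {pred U}) (e : rel U).

Definition adjmx_on : 'M[algC]_#|V| := \matrix_(i, j) (e (enum_val i) (enum_val j))%:R.

(* srg_on without the vertex count, over any collective predicate: for V = T
   itself adjmx_on is adjmx. *)
Definition srg_params (k l m : nat) : Prop :=
  [/\ {in V, forall x, #|[set y in V | e x y]| = k},
      {in V &, forall x y, x != y -> e x y -> #|[set z in V | e x z && e y z]| = l} &
      {in V &, forall x y, x != y -> ~~ e x y -> #|[set z in V | e x z && e y z]| = m}].

Lemma sum_enum_val_card (P : pred U) :
  \sum_(i < #|V|) ((P (enum_val i))%:R : algC) = #|[set z in V | P z]|%:R.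
Proof.
rewrite -(big_enum_val (fun z => (P z)%:R)) -sum1_card natr_sum big_mkcond [RHS]big_mkcond.
by apply: eq_bigr => z _; rewrite !inE; case: (z \in V); case: (P z).
Qed.

Lemma adjmx_on_mulJE p i j :
  (adjmx_on *m (J : 'M_(#|V|, p))) i j = #|[set z in V | e (enum_val i) z]|%:R.
Proof.
by rewrite -sum_enum_val_card !mxE; apply: eq_bigr => l _; rewrite !mxE mulr1.
Qed.

Hypotheses (e_sym : symmetric e) (e_irr : irreflexive e).

Lemma adjmx_on_sqrE i j : (adjmx_on *m adjmx_on) i j =
  #|[set z in V | e (enum_val i) z && e (enum_val j) z]|%:R.
Proof.
rewrite -sum_enum_val_card !mxE; apply: eq_bigr => l _.
by rewrite !mxE -natrM mulnb [e _ (enum_val j)]e_sym.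
Qed.

Lemma adjmx_on_regular k :
  {in V, forall x, #|[set y in V | e x y]| = k} -> adjmx_on *m (J : 'M_#|V|) = k%:R *: J.
Proof.
by move=> reg; apply/matrixP => i j; rewrite adjmx_on_mulJE reg ?enum_valP // !mxE mulr1.
Qed.

Lemma srg_adjmx_on_sqr k l m : srg_params k l m ->
  adjmx_on *m adjmx_on = (k%:R - m%:R)%:M + (l%:R - m%:R) *: adjmx_on + m%:R *: J.
Proof.
case=> deg lam mu; apply/matrixP => i j; rewrite adjmx_on_sqrE !mxE mulr1.
have [<-|ij] := eqVneq i j.
  rewrite e_irr mulr0 addr0 mulr1n subrK -(deg _ (enum_valP i)).
  by rewrite (eq_card (B := [set y in V | e (enum_val i) y])) // => z; rewrite !inE andbb.
have vij : enum_val i != enum_val j by apply: contra_neq ij => /enum_val_inj.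
rewrite mulr0n add0r.
case: (boolP (e _ _)) => [eij|neij]; first by rewrite lam ?enum_valP // mulr1 subrK.
by rewrite mu ?enum_valP // mulr0 add0r.
Qed.

Lemma adjmx_on_sqr_common (x y z : algC) u v :
  adjmx_on *m adjmx_on = x%:M + y *: adjmx_on + z *: J ->
  u \in V -> v \in V -> u != v -> #|[set t in V | e u t && e v t]|%:R = (e u v)%:R * y + z.
Proof.
move=> AA uV vV uv.
have := congr1 (fun M : 'M[algC]_#|V| => M (enum_rank_in uV u) (enum_rank_in uV v)) AA.
have rank_uv : enum_rank_in uV u != enum_rank_in uV v.
  by apply: contra_neq uv => /(congr1 enum_val); rewrite !enum_rankK_in.
rewrite adjmx_on_sqrE !mxE !enum_rankK_in // (negbTE rank_uv) mulr0n add0r mulr1.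
by rewrite mulrC.
Qed.

Lemma srg_params_of_adjmx_on_sqr k (x y z : algC) l m :
  adjmx_on *m (J : 'M_#|V|) = k%:R *: J ->
  adjmx_on *m adjmx_on = x%:M + y *: adjmx_on + z *: J ->
  {in V &, forall u v, u != v -> e u v -> y + z = l%:R} ->
  {in V &, forall u v, u != v -> ~~ e u v -> z = m%:R} ->
  srg_params k l m.
Proof.
move=> AJ AA lam mu; split.
- move=> u uV; apply/eqP; rewrite -(eqr_nat algC).
  have := congr1 (fun M : 'M[algC]_#|V| => M (enum_rank_in uV u) (enum_rank_in uV u)) AJ.
  by rewrite adjmx_on_mulJE enum_rankK_in // !mxE mulr1 => ->.
- move=> u v uV vV uv euv; apply/eqP; rewrite -(eqr_nat algC).
  by rewrite (adjmx_on_sqr_common AA) // euv mul1r (lam u v).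
- move=> u v uV vV uv neuv; apply/eqP; rewrite -(eqr_nat algC).
  by rewrite (adjmx_on_sqr_common AA) // (negbTE neuv) mul0r add0r (mu u v).
Qed.

Lemma srg_params_of_adjmx_on_sqr_ex k (x y z : algC) :
  adjmx_on *m (J : 'M_#|V|) = k%:R *: J ->
  adjmx_on *m adjmx_on = x%:M + y *: adjmx_on + z *: J ->
  exists l m, srg_params k l m.
Proof.
move=> AJ AA.
have [l lam] : exists l : nat, {in V &, forall u v, u != v -> e u v -> y + z = l%:R}.
  case: (pickP [pred uv : U * U | [&& uv.1 \in V, uv.2 \in V, uv.1 != uv.2 & e uv.1 uv.2]]).
    case=> u0 v0 /and4P[u0V v0V uv0 euv0].
    exists #|[set t in V | e u0 t && e v0 t]| => *.
    by rewrite (adjmx_on_sqr_common AA) // euv0 mul1r.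
  by move=> none; exists 0%N => u v uV vV uv euv; have /= := none (u, v); rewrite uV vV uv euv.
have [m mu] : exists m : nat, {in V &, forall u v, u != v -> ~~ e u v -> z = m%:R}.
  case: (pickP [pred uv : U * U | [&& uv.1 \in V, uv.2 \in V, uv.1 != uv.2 & ~~ e uv.1 uv.2]]).
    case=> u0 v0 /and4P[u0V v0V uv0 /negbTE euv0].
    exists #|[set t in V | e u0 t && e v0 t]| => *.
    by rewrite (adjmx_on_sqr_common AA) // euv0 mul0r add0r.
  by move=> none; exists 0%N => u v uV vV uv euv; have /= := none (u, v); rewrite uV vV uv euv.
by exists l, m; apply: srg_params_of_adjmx_on_sqr AJ AA lam mu.
Qed.

End AdjacencyMatrix.

Lemma srg_onP (U : finType) (V : {set U}) (e : rel U) n k l m :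
  srg_on V e n k l m <-> #|V| = n /\ srg_params V e k l m.
Proof. by split=> [[? ? ? ?] | [? [? ? ?]]]. Qed.

Lemma cgraph_sym (U : finType) : symmetric (@cgraph_rel U).
Proof. by move=> A B; rewrite /cgraph_rel eq_sym setIC. Qed.

Lemma cgraph_irr (U : finType) : irreflexive (@cgraph_rel U).
Proof. by move=> A; rewrite /cgraph_rel eqxx. Qed.

Section Cliques.
Variables (T : finType) (e : rel T) (w : nat).
Local Notation W := (wcliques e w).

Lemma card_wclique L : L \in W -> #|L| = w.
Proof. by rewrite inE => /andP[_ /eqP]. Qed.

Lemma wclique_edge L x y : L \in W -> x \in L -> y \in L -> x != y -> e x y.
Proof.
rewrite inE => /andP[/forall_inP cliqueL _] xL yL xy.
by have /forall_inP/(_ y yL)/implyP := cliqueL x xL; apply.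
Qed.

Hypothesis e_creg : clique_regular e w.

Lemma wcliques_meet_le1 L M : L \in W -> M \in W -> L != M -> (#|L :&: M| <= 1)%N.
Proof.
move=> LW MW LM; rewrite leqNgt; apply/card_gt1P => -[x [y []]].
rewrite !inE => /andP[xL xM] /andP[yL yM] xy.
have /eqP/cards1P[K edgeK] := e_creg.2 x y (wclique_edge LW xL yL xy).
have : (L \in [set K]) && (M \in [set K]).
  by move: (LW) (MW); rewrite -edgeK !inE => -> ->; rewrite xL yL xM yM.
by rewrite !inE => /andP[/eqP LK /eqP MK]; move/eqP: LM; apply; rewrite LK MK.
Qed.

Hypothesis e_irr : irreflexive e.

Lemma card_wcliques_at x : (#|[set L in W | x \in L]| * w.-1 = #|[set y | e x y]|)%N.
Proof.
rewrite -[RHS]sum1dep_card.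
rewrite (eq_bigr (fun y => \sum_(L | (L \in W) && ((x \in L) && (y \in L))) 1)%N); last first.
  by move=> y exy; rewrite sum1dep_card e_creg.2.
rewrite (exchange_big_dep (fun L => (L \in W) && (x \in L))) /=; last first.
  by move=> y L _ /andP[-> /andP[-> _]].
rewrite -sum1dep_card big_distrl /=; apply: eq_bigr => L /andP[LW xL].
rewrite mul1n sum1dep_card (_ : [set y | _] = L :\ x).
  by rewrite -(card_wclique LW) (cardsD1 x L) xL.
apply/setP => y; rewrite in_set LW xL in_setD1 /=.
have [->|yx] := eqVneq y x; first by rewrite e_irr.
by case: (boolP (y \in L)) => yL; rewrite ?andbF // (wclique_edge LW xL yL) // eq_sym.
Qed.

End Cliques.

Section Incidence.
Variables (T : finType) (e : rel T) (w : nat).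
Local Notation W := (wcliques e w).

Definition incmx : 'M[algC]_(#|T|, #|W|) :=
  \matrix_(i, j) ((enum_val i : T) \in (enum_val j : {set T}))%:R.

Local Notation N := incmx.
Local Notation B := (adjmx_on W (@cgraph_rel T)).

Lemma J_mul_incmx p : (J : 'M_(p, #|T|)) *m N = w%:R *: J.
Proof.
apply/matrixP => i j; rewrite !mxE mulr1.
rewrite (eq_bigr (fun l => ((enum_val l : T) \in (enum_val j : {set T}))%:R)).
  rewrite sum_enum_val_card (eq_card (B := (enum_val j : {set T}))) => [|x]; last by rewrite !inE.
  by rewrite (card_wclique (enum_valP j)).
by move=> l _; rewrite !mxE mul1r.
Qed.

Hypothesis e_creg : clique_regular e w.

Lemma tr_incmx_mul : N^T *m N = B + w%:R%:M.
Proof.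
apply/matrixP => i j; rewrite !mxE.
set L : {set T} := enum_val i; set M : {set T} := enum_val j.
rewrite (eq_bigr (fun l => (((enum_val l : T) \in L) && (enum_val l \in M))%:R)); last first.
  by move=> l _; rewrite !mxE -natrM mulnb.
rewrite (@sum_enum_val_card _ _ (fun z => (z \in L) && (z \in M))).
rewrite (eq_card (B := L :&: M)) => [|x]; last by rewrite !inE.
have -> : (i == j) = (L == M) by rewrite /L /M; apply/eqP/eqP => [->|/enum_val_inj].
rewrite /cgraph_rel; have [<-|LM] := eqVneq L M.
  by rewrite /= add0r mulr1n setIid (card_wclique (enum_valP i)).
rewrite mulr0n addr0 /=.
have := wcliques_meet_le1 e_creg (enum_valP i) (enum_valP j) LM.
by rewrite -/L -/M -card_gt0; case: #|_| => [|[|]].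
Qed.

Lemma tr_incmx_mulJ p : N^T *m (J : 'M_(#|T|, p)) = w%:R *: J.
Proof.
by apply: trmx_inj; rewrite trmx_mul trmxK trmx_const J_mul_incmx linearZ /= trmx_const.
Qed.

Lemma tr_incmx_mul_real : N^T *m N \is a mxOver Num.real.
Proof. by apply: mxOverM; apply/mxOverP => i j; rewrite !mxE realn. Qed.

Variable c : nat.
Hypotheses (e_irr : irreflexive e)
  (c_at : forall x, #|[set L in W | x \in L]| = c).

Lemma incmx_mulJ p : N *m (J : 'M_(#|W|, p)) = c%:R *: J.
Proof.
apply/matrixP => i j; rewrite !mxE mulr1 -(c_at (enum_val i)).
rewrite (eq_bigr (fun L => ((enum_val i : T) \in (enum_val L : {set T}))%:R)).
  by rewrite (@sum_enum_val_card _ _ (fun L : {set T} => enum_val i \in L)).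
by move=> l _; rewrite !mxE mulr1.
Qed.

Lemma J_mul_tr_incmx p : (J : 'M_(p, #|W|)) *m N^T = c%:R *: J.
Proof.
by apply: trmx_inj; rewrite trmx_mul trmxK trmx_const incmx_mulJ linearZ /= trmx_const.
Qed.

Lemma incmx_mul_tr : N *m N^T = adjmx e + c%:R%:M.
Proof.
apply/matrixP => i j; rewrite !mxE.
set x : T := enum_val i; set y : T := enum_val j.
rewrite (eq_bigr (fun L => ((x \in (enum_val L : {set T})) && (y \in enum_val L))%:R)).
  rewrite (@sum_enum_val_card _ _ (fun L : {set T} => (x \in L) && (y \in L))).
  have -> : (i == j) = (x == y) by rewrite /x /y; apply/eqP/eqP => [->|/enum_val_inj].
  have [<-|xy] := eqVneq x y.
    by rewrite e_irr add0r mulr1n -(c_at x); apply/congr1/eq_card => L; rewrite !inE andbb.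
  rewrite mulr0n addr0; case: (boolP (e x y)) => [exy|nexy]; first by rewrite e_creg.2.
  rewrite (eq_card (B := set0)) ?cards0 // => L; rewrite in_set in_set0.
  by apply: contraNF nexy => /and3P[LW xL yL]; apply: (wclique_edge LW).
by move=> l _; rewrite !mxE -natrM mulnb.
Qed.

Lemma card_wcliques_mul : (#|W| * w = #|T| * c)%N.
Proof.
have := mulmxA (J : 'M_(1, #|T|)) N (J : 'M_(#|W|, 1)).
rewrite J_mul_incmx incmx_mulJ -scalemxAl -scalemxAr !mulJJ !scalerA.
move=> /matrixP/(_ 0 0); rewrite !mxE !mulr1 -!natrM => /eqP.
by rewrite eqr_nat eq_sym mulnC [(#|T| * _)%N]mulnC => /eqP.
Qed.

Lemma cgraph_adjmx_eq0 : (c <= 1)%N -> B = 0.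
Proof.
move=> c_le1; apply/matrixP => i j; rewrite !mxE /cgraph_rel.
have [//|LM /=] := eqVneq (enum_val i : {set T}) (enum_val j).
have [->|[x]] := set_0Vmem (enum_val i :&: enum_val j : {set T}); first by rewrite eqxx.
rewrite inE => /andP[xi xj]; suff : (1 < c)%N by rewrite ltnNge c_le1.
rewrite -(c_at x); apply/card_gt1P; exists (enum_val i), (enum_val j).
by move: (enum_valP i) (enum_valP j); rewrite !in_set xi xj LM => -> ->.
Qed.

End Incidence.

Section CliqueGraph.
Variables (w : nat) (T : finType) (e : rel T) (n k lam mu : nat) (r s : algC).
Hypotheses (w_ge2 : (2 <= w)%N) (e_sym : symmetric e) (e_irr : irreflexive e)
  (e_creg : clique_regular e w) (e_srg : srg_on [set: T] e n k lam mu)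
  (e_nonboring : nonboring e)
  (e_spec : forall a, adj_eigenvalue e a <-> (a = k%:R \/ a = r \/ a = s))
  (s_lt_r : s < r).

Local Notation W := (wcliques e w).
Local Notation A := (adjmx e).
Local Notation B := (adjmx_on W (@cgraph_rel T)).
Local Notation N := (incmx e w).
Local Notation P := (N^T *m N).
Local Notation c := (k %/ w.-1)%N.
Local Notation JT := (J : 'M[algC]_#|T|).
Local Notation JW := (J : 'M[algC]_#|W|).

Lemma card_T : #|T| = n.
Proof. by case: e_srg => <- *; rewrite cardsT. Qed.

Lemma srg_T : srg_params T e k lam mu.
Proof.
case: e_srg => _ deg lam_e mu_e.
have setT_pred (p : pred T) : [set z in [set: T] | p z] = [set z in T | p z].
  by apply/setP => z; rewrite !inE.
split=> [x _|x y _ _|x y _ _]; rewrite -setT_pred; [exact: deg | exact: lam_e | exact: mu_e].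
Qed.

Lemma deg_k x : #|[set y | e x y]| = k.
Proof.
by case: srg_T => deg _ _; rewrite -(deg x) //; apply: eq_card => y; rewrite !inE.
Qed.

Lemma w1_gt0 : (0 < w.-1)%N.
Proof. by case: w w_ge2 => [|[|]]. Qed.

Lemma wcliques_at_c x : #|[set L in W | x \in L]| = c.
Proof. by rewrite -(deg_k x) -(card_wcliques_at e_creg e_irr) mulnK // w1_gt0. Qed.

Lemma k_eq : k = (c * w.-1)%N.
Proof.
by case: e_creg => [[x _] _]; rewrite -(wcliques_at_c x) (card_wcliques_at e_creg e_irr) deg_k.
Qed.

Lemma lam_lt_k : (lam < k)%N.
Proof.
case: e_creg => [[x [y exy]] _]; case: srg_T => _ lam_e _.
have xy : x != y by apply: contraTneq exy => ->; rewrite e_irr.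
rewrite -(lam_e x y) // -(deg_k x) [X in (_ < X)%N](cardsD1 y) inE exy add1n ltnS.
rewrite subset_leq_card //.
apply/subsetP => z; rewrite !inE => /and3P[_ exz eyz]; rewrite exz andbT.
by apply: contraTneq eyz => ->; rewrite e_irr.
Qed.

Lemma adj_mulJ : A *m JT = k%:R *: JT.
Proof. by case: srg_T => deg _ _; apply: adjmx_on_regular. Qed.

Lemma adj_sqr : A *m A = (k%:R - mu%:R)%:M + (lam%:R - mu%:R) *: A + mu%:R *: JT.
Proof. exact (srg_adjmx_on_sqr e_sym e_irr srg_T). Qed.

Lemma eigen_root a : adj_eigenvalue e a -> a != k%:R ->
  a ^+ 2 = (lam%:R - mu%:R) * a + (k%:R - mu%:R).
Proof.
move=> /eigenvalueP[v vA v0] ak; apply: (eigenvector_sqr_root v0 vA adj_sqr).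
by rewrite -scalemxAr (eigenvector_mulJ vA adj_mulJ ak) scaler0.
Qed.

Lemma eigen_r : adj_eigenvalue e r. Proof. by apply/e_spec; right; left. Qed.
Lemma eigen_s : adj_eigenvalue e s. Proof. by apply/e_spec; right; right. Qed.
Lemma eigen_k : adj_eigenvalue e k%:R. Proof. by apply/e_spec; left. Qed.

Lemma r_neq_s : r != s. Proof. by rewrite gt_eqF. Qed.

Lemma r_s_neq_k : r != k%:R /\ s != k%:R.
Proof.
have [a [b [d [ea [eb [ed [ab [bd ad]]]]]]]] := e_nonboring.
by split; apply/eqP => kE; move: ab bd ad;
  case/e_spec: ea => [|[|]] ->; case/e_spec: eb => [|[|]] ->; case/e_spec: ed => [|[|]] ->;
  rewrite ?kE ?eqxx.
Qed.

Lemma eigen_sum : r + s = lam%:R - mu%:R.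
Proof.
have [rk sk] := r_s_neq_k.
exact: quadratic_roots_sum (eigen_root eigen_r rk) (eigen_root eigen_s sk) r_neq_s.
Qed.

Lemma eigen_mul : r * s = mu%:R - k%:R.
Proof.
have [rk _] := r_s_neq_k; have := eigen_root eigen_r rk; rewrite -eigen_sum => rr.
by apply: (addrI (r ^+ 2)); rewrite [in RHS]rr; ring.
Qed.

Lemma adj_factor : (A - r%:M) *m (A - s%:M) = mu%:R *: JT.
Proof.
rewrite mulmxBl !mulmxBr adj_sqr mul_mx_scalar mul_scalar_mx -scalar_mxM.
have km : k%:R - mu%:R = - (r * s) by rewrite eigen_mul opprB.
by apply/matrixP => i j; rewrite !mxE km -eigen_sum; ring.
Qed.

Lemma c_gt0 : (0 < c)%N.
Proof. by rewrite lt0n; apply: contraTneq lam_lt_k => c0; rewrite k_eq c0. Qed.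

(* For c = 1 the cliques partition the vertices and A + I = N Nᵀ satisfies
   (A + I)² = ω(A + I), leaving room for two eigenvalues only. *)
Lemma c_gt1 : (1 < c)%N.
Proof.
rewrite ltnNge; apply/negP => c_le1.
have c1 : c = 1%N by move: c_gt0 c_le1; case: c => [|[|]].
have B0 := cgraph_adjmx_eq0 wcliques_at_c c_le1.
have AI_sqr : (A + 1%:M) *m (A + 1%:M) = 0%:M + w%:R *: (A + 1%:M) + 0.
  have <- : N *m N^T = A + 1%:M by rewrite (incmx_mul_tr e_creg e_irr wcliques_at_c) c1.
  rewrite mulmxA -(mulmxA N) (tr_incmx_mul e_creg) B0 add0r mul_mx_scalar -scalemxAl.
  by rewrite addr0 raddf0 add0r.
have root a : adj_eigenvalue e a -> (a + 1) ^+ 2 = w%:R * (a + 1) + 0.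
  move=> /eigenvalueP[v vA v0]; apply: (eigenvector_sqr_root v0 _ AI_sqr); last exact: mulmx0.
  by rewrite mulmxDr vA mulmx1 scalerDl scale1r.
have [rk sk] := r_s_neq_k.
move/eqP: r_neq_s; apply; apply: (addIr 1).
apply: (quadratic_third_root (root _ eigen_k) (root _ eigen_r) (root _ eigen_s));
  by rewrite (inj_eq (addIr 1)) eq_sym.
Qed.

Lemma Nc_root_nat : (- c%:R) ^+ 2 = (lam%:R - mu%:R) * (- c%:R) + (k%:R - mu%:R) :> algC ->
  (c * c + lam * c + mu = k + mu * c)%N.
Proof.
move=> E; apply/eqP; rewrite -(eqr_nat algC) !natrD !natrM -subr_eq0; apply/eqP.
transitivity ((- c%:R) ^+ 2 - ((lam%:R - mu%:R) * (- c%:R) + (k%:R - mu%:R)) : algC).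
  by ring.
by rewrite E subrr.
Qed.

Lemma r_neq_Nc : r != - c%:R.
Proof.
apply/eqP => rc; have [rk _] := r_s_neq_k.
have := eigen_root eigen_r rk; rewrite rc => /Nc_root_nat E1.
have s_eq : s = lam%:R - mu%:R + c%:R by rewrite -eigen_sum rc; ring.
have E2 : (lam + c + c < mu)%N.
  rewrite -(ltr_nat algC) -subr_gt0.
  have -> : mu%:R - (lam + c + c)%N%:R = r - s :> algC by rewrite s_eq rc !natrD; ring.
  by rewrite subr_gt0.
have := lam_lt_k; have := c_gt1; nia.
Qed.

Lemma c_neq0 : c%:R != 0 :> algC.
Proof. by rewrite pnatr_eq0 -lt0n c_gt0. Qed.

Lemma incmx_mul_trE : N *m N^T = A + c%:R%:M.
Proof. exact (incmx_mul_tr e_creg e_irr wcliques_at_c). Qed.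

Lemma cgraph_adjmxE : B = P - w%:R%:M.
Proof. by rewrite (tr_incmx_mul e_creg) addrK. Qed.

Lemma incmx_shift a : N *m N^T - (a + c%:R)%:M = A - a%:M.
Proof. by rewrite incmx_mul_trE; apply/matrixP => i j; rewrite !mxE; ring. Qed.

Lemma J_mul_P : JW *m P = (c * w)%:R *: JW.
Proof.
by rewrite mulmxA (J_mul_tr_incmx wcliques_at_c) -scalemxAl J_mul_incmx scalerA -natrM.
Qed.

Lemma incidence_factor :
  (P - (r + c%:R)%:M) *m (P - (s + c%:R)%:M) *m P = (mu * w ^ 2)%:R *: JW.
Proof.
rewrite !mulmxA -(mulmxA (P - _)) trmx_mul_shift mulmxA trmx_mul_shift -!mulmxA.
rewrite (mulmxA (_ - _)) !incmx_shift adj_factor -scalemxAl J_mul_incmx -scalemxAr.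
by rewrite -scalemxAr tr_incmx_mulJ !scalerA -!natrM -mulnA mulnn.
Qed.

Lemma tr_incmx_mul_sym : P^T = P.
Proof. by rewrite trmx_mul trmxK. Qed.

Lemma cgraph_factor_Nc : s = - c%:R -> (P - (r + c%:R)%:M) *m P = (mu%:R * w%:R / c%:R) *: JW.
Proof.
move=> sc; set Q := P - _.
(* Y *m N^T = 0 makes (N^T *m Y)^2 vanish, and N^T *m Y is real symmetric. *)
pose Y := (A - r%:M) *m N - (mu%:R / c%:R) *: (J : 'M_(#|T|, #|W|)).
have YN : Y *m N^T = 0.
  have NNs : N *m N^T = A - s%:M.
    by rewrite incmx_mul_trE sc; apply/matrixP => i j; rewrite !mxE; ring.
  rewrite mulmxBl -mulmxA NNs adj_factor -scalemxAl (J_mul_tr_incmx wcliques_at_c).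
  by rewrite scalerA divfK ?c_neq0 ?subrr.
have NY : N^T *m Y = Q *m P - (mu%:R * w%:R / c%:R) *: JW.
  rewrite mulmxBr -incmx_shift !mulmxA -trmx_mul_shift -scalemxAr.
  by rewrite tr_incmx_mulJ scalerA mulrAC.
have QP_sym : (Q *m P)^T = Q *m P.
  rewrite trmx_mul tr_incmx_mul_sym linearB /= tr_scalar_mx tr_incmx_mul_sym.
  by rewrite /Q mulmxBl mulmxBr mul_mx_scalar mul_scalar_mx.
have rc_real : r + c%:R \is Num.real.
  have -> : r + c%:R = lam%:R - mu%:R + c%:R + c%:R by rewrite -eigen_sum sc; ring.
  by rewrite !rpredD ?rpredN ?realn.
have P_real := tr_incmx_mul_real e w.
have : N^T *m Y = 0.
  apply: realmx_sym_sqr_eq0.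
  - rewrite NY /Q mulmxBl mul_scalar_mx !realmxB ?mxOverZ ?mxOver_const ?rpredM ?rpredV ?realn //.
    + exact: mxOverM.
    + exact: rpred1.
  - by rewrite NY linearB /= linearZ /= trmx_const QP_sym.
  - by rewrite mulmxA -(mulmxA N^T) YN mulmx0 mul0mx.
by move/eqP; rewrite NY subr_eq0 => /eqP.
Qed.

Lemma Nc_not_eigen : s != - c%:R -> ~ adj_eigenvalue e (- c%:R).
Proof.
move=> sc /e_spec[kc|[rc|/eqP]]; last by rewrite eq_sym (negbTE sc).
- have : (k + c)%:R == 0 :> algC by rewrite natrD -kc addNr.
  by rewrite pnatr_eq0 addn_eq0 => /andP[_ /eqP c0]; move: c_gt0; rewrite c0.
- by move/eqP: r_neq_Nc; rewrite rc.
Qed.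

Lemma incmx_mul_tr_unit : s != - c%:R -> N *m N^T \in unitmx.
Proof.
move=> /Nc_not_eigen; rewrite /adj_eigenvalue /eigenvalue /eigenspace => /negP.
by rewrite negbK kermx_eq0 row_free_unit incmx_mul_trE raddfN opprK.
Qed.

Lemma tr_incmx_mul_unit : c = w -> s != - c%:R -> P \in unitmx.
Proof.
move=> cw sc; have WT : #|W| = #|T|.
  by apply/eqP; rewrite -(eqn_pmul2r (ltnW w_ge2)) (card_wcliques_mul wcliques_at_c) cw.
have NPN_unit : N *m P *m N^T \in unitmx.
  by rewrite !mulmxA -mulmxA unitmx_mul incmx_mul_tr_unit.
rewrite -row_free_unit /row_free eqn_leq rank_leq_row /= [X in (X <= _)%N]WT.
rewrite -[X in (X <= _)%N](mxrank_unit NPN_unit).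
exact: leq_trans (mxrankM_maxl _ _) (mxrankM_maxr _ _).
Qed.

Lemma cgraph_factor : s = - c%:R \/ c = w ->
  (P - (r + c%:R)%:M) *m (P - (s + c%:R)%:M) = (mu%:R * w%:R / c%:R) *: JW.
Proof.
move=> cond; have [sc|sc] := eqVneq s (- c%:R).
  by rewrite sc addNr (raddf0 (@scalar_mx _ _)) subr0 cgraph_factor_Nc.
have cw : c = w by case: cond => // /eqP; rewrite (negbTE sc).
apply: (can_inj (mulmxK (tr_incmx_mul_unit cw sc))).
rewrite incidence_factor -scalemxAl J_mul_P scalerA; congr (_ *: _).
by rewrite !natrM; field; exact: c_neq0.
Qed.

Lemma cgraph_sqr : s = - c%:R \/ c = w ->
  B *m B = (- ((w%:R - r - c%:R) * (w%:R - s - c%:R)))%:M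
           + (r + s + c%:R *+ 2 - w%:R *+ 2) *: B + (mu%:R * w%:R / c%:R) *: JW.
Proof.
move=> /cgraph_factor; rewrite (tr_incmx_mul e_creg).
have shift a : B + w%:R%:M - (a + c%:R)%:M = B + (w%:R - a - c%:R)%:M.
  by apply/matrixP => i j; rewrite !mxE; ring.
rewrite !shift mulmx_shift => <-.
by apply/matrixP => i j; rewrite !mxE; ring.
Qed.

Lemma cgraph_mulJ : B *m JW = (c.-1 * w)%:R *: JW.
Proof.
have : P *m JW = (c * w)%:R *: JW.
  by rewrite -mulmxA (incmx_mulJ wcliques_at_c) -scalemxAr tr_incmx_mulJ scalerA -natrM mulnC.
rewrite (tr_incmx_mul e_creg) mulmxDl mul_scalar_mx => /(canRL (addrK _)) ->.
rewrite -scalerBl -natrB ?leq_pmull ?c_gt0 //.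
by congr (_%:R *: _); have := c_gt0; nia.
Qed.

Lemma cgraph_degree_shift : (c.-1 * w)%:R = k%:R + c%:R - w%:R :> algC.
Proof.
have E : (c.-1 * w + w = k + c)%N.
  have := k_eq; have := c_gt0; have := w1_gt0; set d := (k %/ w.-1)%N; nia.
by apply: (addIr w%:R); rewrite -[in LHS]natrD E natrD subrK.
Qed.

Lemma mu_eq_c : s = - c%:R -> lam = (w - 2)%N -> mu = c.
Proof.
move=> sc lw; have [_ sk] := r_s_neq_k.
have := eigen_root eigen_s sk; rewrite sc => /Nc_root_nat.
have := k_eq; have := c_gt1; rewrite lw; set d := (k %/ w.-1)%N => d_gt1 kE E; clearbody d.
have shift : ((w - 2) * d + d = d * w.-1)%N by rewrite mulnC -mulnSr; congr (d * _); lia.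
have {E kE shift} E : (d * d + mu = d + mu * d)%N by lia.
apply/eqP; rewrite -(eqn_pmul2l (_ : 0 < d - 1)%N); last by lia.
by apply/eqP; clear -E d_gt1; nia.
Qed.

(* The λ-part is stated additively to avoid truncated subtraction. *)
Lemma cgraph_srg : s = - c%:R \/ c = w ->
  exists l m, srg_params W (@cgraph_rel T) (c.-1 * w) l m /\
    (lam = (w - 2)%N -> l + 2 = c /\ m + c = mu + w)%N.
Proof.
move=> cond; have BB := cgraph_sqr cond.
have [lw|nlw] := eqVneq lam (w - 2)%N; last first.
  have [l [m srgB]] := srg_params_of_adjmx_on_sqr_ex (@cgraph_sym T) cgraph_mulJ BB.
  by exists l, m; split => // lw; rewrite lw eqxx in nlw.
have mu_w : mu = c \/ c = w by case: cond => [sc|]; [left; apply: mu_eq_c | right].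
have c_le : (c <= mu + w)%N by case: mu_w => ->; rewrite ?leq_addr ?leq_addl.
have z_eq : mu%:R * w%:R / c%:R = (mu + w - c)%N%:R :> algC.
  rewrite natrB // natrD; case: mu_w => [->|cw]; last by rewrite -{1}cw mulfK ?c_neq0 // cw addrK.
  by rewrite mulrAC divff ?c_neq0 // mul1r addrAC subrr add0r.
exists (c - 2)%N, (mu + w - c)%N; split; last by rewrite !subnK ?c_gt1.
apply: (srg_params_of_adjmx_on_sqr (@cgraph_sym T) cgraph_mulJ BB) => u v _ _ _ _ //.
rewrite z_eq !natrB ?c_gt1 // natrD eigen_sum lw natrB //.
case: mu_w => [->|cw]; last rewrite cw; ring.
Qed.

Lemma cgraph_eigen_shift a : adj_eigenvalue e a -> a != - c%:R -> eigenvalue B (a + c%:R - w%:R).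
Proof.
move=> /eigenvalueP[v vA v0] ac; apply/eigenvalueP; exists (v *m N).
  rewrite cgraph_adjmxE mulmxBr mul_mx_scalar mulmxA -(mulmxA v) incmx_mul_trE mulmxDr vA.
  by rewrite mul_mx_scalar -scalerDl -scalemxAl -scalerBl.
apply: contra_neq ac => vN0.
have : (a + c%:R) *: v = 0.
  by rewrite scalerDl -vA -mul_mx_scalar -mulmxDr -incmx_mul_trE mulmxA vN0 mul0mx.
by move/eqP; rewrite scaler_eq0 (negbTE v0) orbF addr_eq0 => /eqP.
Qed.

(* The eigenvalue -ω, written as the shift of -c to match cgraph_eigen_shift. *)
Lemma cgraph_eigen_Nw : s != - c%:R -> c != w -> eigenvalue B (- c%:R + c%:R - w%:R).
Proof.
move=> sc cw; have TW : (#|T| < #|W|)%N.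
  rewrite ltn_neqAle; apply/andP; split.
    apply: contra_neq cw => TW; apply/eqP; rewrite -(eqn_pmul2l (_ : 0 < #|W|)%N).
      by rewrite (card_wcliques_mul wcliques_at_c) TW mulnC.
    by case: e_creg => [[x _] _]; rewrite -TW; apply/card_gt0P; exists x.
  rewrite -[X in (X <= _)%N](mxrank_unit (incmx_mul_tr_unit sc)).
  exact: leq_trans (mxrankM_maxl _ _) (rank_leq_col _).
have : kermx N^T != 0.
  rewrite kermx_eq0 /row_free; apply: contraTneq TW => <-.
  by rewrite -leqNgt mxrank_tr rank_leq_row.
case/rowV0Pn => u /sub_kermxP uN u0; apply/eigenvalueP; exists u => //.
by rewrite cgraph_adjmxE mulmxBr mulmxA uN mul0mx sub0r addNr add0r mul_mx_scalar scaleNr.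
Qed.

Lemma cond_of_cgraph_srg k' l' m' :
  srg_params W (@cgraph_rel T) k' l' m' -> s = - c%:R \/ c = w.
Proof.
move=> srgB; have [sc|sc] := eqVneq s (- c%:R); [by left | right].
apply/eqP; apply: contraT => cw; have [rk sk] := r_s_neq_k.
have BB := srg_adjmx_on_sqr (@cgraph_sym T) (@cgraph_irr T) srgB.
have root a : a != k%:R -> eigenvalue B (a + c%:R - w%:R) ->
    (a + c%:R - w%:R) ^+ 2 = (l'%:R - m'%:R) * (a + c%:R - w%:R) + (k'%:R - m'%:R).
  move=> ak /eigenvalueP[v vB v0]; apply: (eigenvector_sqr_root v0 vB BB).
  rewrite -scalemxAr (eigenvector_mulJ vB cgraph_mulJ) ?scaler0 // cgraph_degree_shift.
  by apply: contra_neq ak => /addIr/addIr.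
have shift (a b : algC) : a != b -> a + c%:R - w%:R != b + c%:R - w%:R.
  by move=> ab; apply: contra_neq ab => /addIr/addIr.
have Nck : - c%:R != k%:R :> algC.
  by apply/eqP => Nck; apply: (Nc_not_eigen sc); rewrite Nck; exact: eigen_k.
have := quadratic_third_root (root r rk (cgraph_eigen_shift eigen_r r_neq_Nc))
  (root s sk (cgraph_eigen_shift eigen_s sc)) (root _ Nck (cgraph_eigen_Nw sc cw))
  (shift _ _ r_neq_s) (shift _ _ r_neq_Nc).
by move/addIr/addIr/eqP; rewrite (negbTE sc).
Qed.

Lemma k_div (R : numFieldType) : k%:R / (w.-1)%:R = c%:R :> R.
Proof. by rewrite {1}k_eq natrM mulfK // pnatr_eq0 -lt0n w1_gt0. Qed.

Lemma cond_iff : (s = - k%:R / (w.-1)%:R \/ k = (w * w.-1)%N) <-> (s = - c%:R \/ c = w).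
Proof.
rewrite mulNr k_div; split=> -[->|kw]; [by left | right | by left | right].
  by rewrite kw mulnK // w1_gt0.
by rewrite {1}k_eq kw.
Qed.

Lemma card_wcliques_rat : #|W|%:R = (n * k)%:R / (w * w.-1)%:R :> rat.
Proof.
have -> : (n * k = #|W| * (w * w.-1))%N.
  by rewrite -card_T {1}k_eq mulnA -(card_wcliques_mul wcliques_at_c) mulnA.
by rewrite natrM mulfK // pnatr_eq0 muln_eq0 negb_or -!lt0n w1_gt0 andbT ltnW.
Qed.

Lemma cgraph_degree_rat : (c.-1 * w)%:R = w%:R * (k%:R / (w.-1)%:R - 1) :> rat.
Proof. by rewrite k_div -[in RHS](prednK c_gt0) -addn1 natrD addrK natrM mulrC. Qed.

End CliqueGraph.

Theorem theorem9 (w : nat) (T : finType) (e : rel T) (n k lam mu : nat) (r s : algC) :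
  (2 <= w)%N -> symmetric e -> irreflexive e ->
  clique_regular e w ->
  srg_on [set: T] e n k lam mu ->
  nonboring e ->
  (forall a : algC, adj_eigenvalue e a <-> (a = k%:R \/ a = r \/ a = s)) ->
  s < r ->
  ((exists n' k' lam' mu' : nat, srg_on (wcliques e w) (@cgraph_rel T) n' k' lam' mu')
     <-> (s = - (k%:R) / (w.-1)%:R \/ k = (w * w.-1)%N))
  /\
  ((s = - (k%:R) / (w.-1)%:R \/ k = (w * w.-1)%N) ->
   exists n' k' lam' mu' : nat,
     [/\ srg_on (wcliques e w) (@cgraph_rel T) n' k' lam' mu',
         (n'%:R : rat) = (n * k)%:R / (w * w.-1)%:R,
         (k'%:R : rat) = w%:R * (k%:R / (w.-1)%:R - 1) &
         (lam = (w - 2)%N ->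
            (lam'%:R : rat) = k%:R / (w.-1)%:R - 2 /\
            (mu'%:R : rat) = mu%:R + w%:R - k%:R / (w.-1)%:R)]).
Proof.
move=> w_ge2 e_sym e_irr e_creg e_srg e_nonboring e_spec s_lt_r.
have srg_of_cond := cgraph_srg w_ge2 e_sym e_irr e_creg e_srg e_nonboring e_spec s_lt_r.
rewrite (cond_iff s w_ge2 e_irr e_creg e_srg); split; first split.
- case=> n' [k' [l' [m' /srg_onP[_ srgB]]]].
  exact: cond_of_cgraph_srg w_ge2 e_sym e_irr e_creg e_srg e_nonboring e_spec s_lt_r
    _ _ _ srgB.
- case/srg_of_cond => l' [m' [srgB _]].
  by exists #|wcliques e w|, ((k %/ w.-1).-1 * w)%N, l', m'; apply/srg_onP.
case/srg_of_cond => l' [m' [srgB lam_case]].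
exists #|wcliques e w|, ((k %/ w.-1).-1 * w)%N, l', m'; split.
- exact/srg_onP.
- exact: card_wcliques_rat w_ge2 e_irr e_creg e_srg.
- exact: cgraph_degree_rat w_ge2 e_irr e_creg e_srg.
move=> /lam_case[lc mc]; rewrite (k_div w_ge2 e_irr e_creg e_srg); split.
  by rewrite -lc natrD addrK.
by rewrite -natrD -mc natrD addrK.
Qed.
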